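(* Suppose there are at least three states ($n\ge3$). A non-trivial updating rule that continuously distorts beliefs respects the Blackwell order if and only if it is Bayes' law, i.e. $\varphi^{\mu}(x)=x$ for all $x\in\Delta$ and all priors $\mu$ in the relative interior of $\Delta$.
   Context: Let $\Theta$ be a finite set of states, $|\Theta|=n$, and $\Delta=\Delta(\Theta)$ the simplex of beliefs on $\Theta$. An experiment is a map $\pi:\Theta\to\Delta(S)$ with $S$ finite; with a full-support prior $\mu$ it induces the Bayesian distribution over posteriors $\rho_B$, a finitely supported distribution on $\Delta$ with mean $\mu$ (every such distribution arises from some experiment). Blackwell order: $\pi\succeq\pi'$ iff $\rho_B'$ is a mean-preserving contraction of $\rho_B$. An updating rule is given, for each prior $\mu$ in the relative interior of $\Delta$, by a distortion function $\varphi^{\mu}:\Delta\to\Delta$: when the Bayesian posterior is $x$, the decision maker holds belief $\varphi^{\mu}(x)$. For a compact action set $A$, continuous $u:A\times\Theta\to\mathbb{R}$, and consistent choice $a^*:\Delta\to A$ (i.e. $a^*(y)\in\arg\max_{a}\mathbb{E}_y u(a,\theta)$ for all $y$), let $W(x)=\mathbb{E}_x u(a^*(\varphi^{\mu}(x)),\theta)$. The rule respects the Blackwell order for $\mu$ if for all such $A,u,a^*$ and all experiments $\pi\succeq\pi'$ with Bayesian distributions $\rho_B,\rho_B'$, $\mathbb{E}_{\rho_B}W\ge\mathbb{E}_{\rho_B'}W$; it respects the Blackwell order if it does so for every full-support $\mu$. The rule continuously distorts beliefs if each $\varphi^{\mu}$ is continuous on $\Delta$; it is non-trivial if for every $\mu$,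 $\varphi^{\mu}$ is not constant on $\Delta$. *)

From HB Require Import structures.
From mathcomp Require Import all_boot all_order all_algebra.
From mathcomp Require Import all_classical all_reals all_analysis.

Set Implicit Arguments.
Unset Strict Implicit.
Unset Printing Implicit Defensive.

Import Order.TTheory GRing.Theory Num.Theory.
Import numFieldNormedType.Exports.
Local Open Scope classical_set_scope.
Local Open Scope ring_scope.

Section Defs.
Variables (R : realType) (n : nat).

(* Beliefs on Theta = 'I_n are row vectors; Delta is the simplex. *)
Definition simplex : set 'rV[R]_n :=
  [set x | (forall i, 0 <= x ord0 i) /\ \sum_i x ord0 i = 1].

Definition rel_interior : set 'rV[R]_n :=
  [set x | (forall i, 0 < x ord0 i) /\ \sum_i x ord0 i = 1].

Definition experiment (S : finType) (pi : 'I_n -> S -> R) : Prop :=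
  (forall t s, 0 <= pi t s) /\ (forall t, \sum_s pi t s = 1).

Definition sig_prob (S : finType) (mu : 'rV[R]_n) (pi : 'I_n -> S -> R) (s : S) : R :=
  \sum_t mu ord0 t * pi t s.

(* Bayesian posterior after signal s (irrelevant when sig_prob = 0). *)
Definition posterior (S : finType) (mu : 'rV[R]_n) (pi : 'I_n -> S -> R) (s : S)
  : 'rV[R]_n :=
  \row_t (mu ord0 t * pi t s / sig_prob mu pi s).

(* Expectation of f under the Bayesian distribution over posteriors rho_B
   induced by (mu, pi): rho_B puts mass sig_prob s on posterior s. *)
Definition bayes_expect (S : finType) (mu : 'rV[R]_n) (pi : 'I_n -> S -> R)
  (f : 'rV[R]_n -> R) : R :=
  \sum_s sig_prob mu pi s * f (posterior mu pi s).

(* rho_B' (from pi') is a mean-preserving contraction of rho_B (from pi):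
   there is a coupling g of rho_B and rho_B' such that the conditional mean
   of the rho_B-posterior given each rho_B'-posterior equals the latter. *)
Definition mpc (S S' : finType) (mu : 'rV[R]_n)
  (pi : 'I_n -> S -> R) (pi' : 'I_n -> S' -> R) : Prop :=
  exists g : S -> S' -> R,
    [/\ forall s s', 0 <= g s s',
        forall s, \sum_s' g s s' = sig_prob mu pi s,
        forall s', \sum_s g s s' = sig_prob mu pi' s' &
        forall s' t, \sum_s g s s' * posterior mu pi s ord0 t
                     = sig_prob mu pi' s' * posterior mu pi' s' ord0 t].

Definition blackwell_geq (S S' : finType) (mu : 'rV[R]_n)
  (pi : 'I_n -> S -> R) (pi' : 'I_n -> S' -> R) : Prop :=
  mpc mu pi pi'.

Definition exp_util (A : Type) (u : A -> 'I_n -> R) (y : 'rV[R]_n) (a : A) : R :=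
  \sum_t y ord0 t * u a t.

Definition consistent_choice (A : Type) (u : A -> 'I_n -> R) (astar : 'rV[R]_n -> A)
  : Prop :=
  forall y, simplex y -> forall a, exp_util u y a <= exp_util u y (astar y).

Definition updating_rule (phi : 'rV[R]_n -> 'rV[R]_n -> 'rV[R]_n) : Prop :=
  forall mu, rel_interior mu -> forall x, simplex x -> simplex (phi mu x).

Definition W (phi : 'rV[R]_n -> 'rV[R]_n -> 'rV[R]_n) (mu : 'rV[R]_n)
  (A : Type) (u : A -> 'I_n -> R) (astar : 'rV[R]_n -> A) (x : 'rV[R]_n) : R :=
  exp_util u x (astar (phi mu x)).

Definition respects_blackwell_for (phi : 'rV[R]_n -> 'rV[R]_n -> 'rV[R]_n)
  (mu : 'rV[R]_n) : Prop :=
  forall (A : topologicalType) (u : A -> 'I_n -> R) (astar : 'rV[R]_n -> A),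
    compact [set: A] -> (forall t, continuous (fun a => u a t)) ->
    consistent_choice u astar ->
    forall (S S' : finType) (pi : 'I_n -> S -> R) (pi' : 'I_n -> S' -> R),
      experiment pi -> experiment pi' -> blackwell_geq mu pi pi' ->
      bayes_expect mu pi' (W phi mu u astar) <= bayes_expect mu pi (W phi mu u astar).

Definition respects_blackwell (phi : 'rV[R]_n -> 'rV[R]_n -> 'rV[R]_n) : Prop :=
  forall mu, rel_interior mu -> respects_blackwell_for phi mu.

Definition continuously_distorts (phi : 'rV[R]_n -> 'rV[R]_n -> 'rV[R]_n) : Prop :=
  forall mu, rel_interior mu -> {within simplex, continuous (phi mu)}.

Definition nontrivial_rule (phi : 'rV[R]_n -> 'rV[R]_n -> 'rV[R]_n) : Prop :=
  forall mu, rel_interior mu ->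
    exists x y, [/\ simplex x, simplex y & phi mu x <> phi mu y].

Definition is_bayes (phi : 'rV[R]_n -> 'rV[R]_n -> 'rV[R]_n) : Prop :=
  forall mu, rel_interior mu -> forall x, simplex x -> phi mu x = x.

End Defs.

(* Bayes' law respects the Blackwell order by the easy half of Blackwell's
   theorem.  Conversely, fix a prior [mu] and let [f := phi mu].  Refining one
   posterior into two is a Blackwell improvement, so for every decision problem
   the value [x |-> E_x u (a* (f x))] is convex on the simplex.  For the bet
   "take the payoff [v] or decline", whose value is [v.x] when [v.(f x) >= 0]
   and [0] otherwise, convexity forbids [f] to reverse the sign of [v] at one
   belief [x0] ([v.x0 > 0 > v.(f x0)]) unless it does so at every interior
   belief.  Choosing [v] supported on two states shows that [f x - f x0] is
   parallel to [f x0 - x0] for every interior [x].  If [f x0 <> x0], running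
   the same argument from an interior belief off the line through [x0] (this
   needs three states) forces [f] to be constant on the interior, hence on the
   simplex by continuity, contradicting non-triviality. *)

From HB Require Import structures.
From mathcomp Require Import all_boot all_order all_algebra.
From mathcomp Require Import all_classical all_reals all_analysis.
From mathcomp Require Import ring lra.

Set Implicit Arguments.
Unset Strict Implicit.
Unset Printing Implicit Defensive.
Import Order.TTheory GRing.Theory Num.Theory.
Import numFieldNormedType.Exports.
Local Open Scope classical_set_scope.
Local Open Scope ring_scope.

Section Simplex.
Variables (R : realType) (n : nat).
Implicit Types (x y a b : 'rV[R]_n).

Lemma rel_interior_simplex x : rel_interior x -> simplex x.
Proof. by case=> x_gt0 x1; split=> // t; exact/ltW. Qed.

Lemma simplex_le1 x t : simplex x -> x ord0 t <= 1.
Proof. by case=> x_ge0 <-; rewrite (bigD1 t) //= lerDl sumr_ge0. Qed.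

Lemma simplex_conv a b (lam : R) : simplex a -> simplex b -> 0 <= lam <= 1 ->
  simplex (lam *: a + (1 - lam) *: b).
Proof.
move=> [a_ge0 a1] [b_ge0 b1] /andP[lam0 lam1]; split=> [t|].
  by rewrite !mxE addr_ge0 ?mulr_ge0 ?subr_ge0.
under eq_bigr do rewrite !mxE.
by rewrite big_split /= -!mulr_sumr a1 b1 !mulr1 subrKC.
Qed.

Lemma rel_interior_decomposition x : rel_interior x ->
  exists2 e : R, 0 < e < 1 &
    forall y, simplex y -> simplex ((1 - e)^-1 *: (x - e *: y)).
Proof.
case=> x_gt0 x1; pose e := \big[Order.min/2^-1]_t x ord0 t.
have e_gt0 : 0 < e.
  apply: (big_ind (fun r => 0 < r)) => [|r s r0 s0|t _]; last exact: x_gt0.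
    by rewrite invr_gt0.
  by rewrite lt_min r0 s0.
have e_lt1 : e < 1 by apply: (@le_lt_trans _ _ 2^-1); [exact: bigmin_le_id | lra].
have e_le t : e <= x ord0 t by exact: bigmin_le.
exists e; first by rewrite e_gt0.
move=> y [y_ge0 y1]; split=> [t|].
  rewrite !mxE mulr_ge0 ?invr_ge0 ?subr_ge0 ?(ltW e_lt1) //.
  by have := simplex_le1 t (conj y_ge0 y1); have := e_le t; have := y_ge0 t; nra.
under eq_bigr do rewrite !mxE.
by rewrite -mulr_sumr sumrB -mulr_sumr x1 y1 mulr1 mulVf // subr_eq0 gt_eqF.
Qed.

Lemma exists_interior_off_line x0 (d : 'rV[R]_n) : (3 <= n)%N ->
  exists x1, rel_interior x1 /\ forall c, x1 - x0 != c *: d.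
Proof.
move=> n3.
have n0 : (0 < n)%N by apply: leq_trans n3.
have n1 : (1 < n)%N by apply: leq_trans n3.
pose i0 := Ordinal n0; pose i1 := Ordinal n1; pose i2 := Ordinal n3.
have ninv_gt0 : 0 < n%:R^-1 :> R by rewrite invr_gt0 ltr0n.
pose e : R := n%:R^-1 / 2.
pose p k : 'rV[R]_n := \row_t (n%:R^-1 + e * ((t == i0)%:R - (t == k)%:R)).
have delta1 k : \sum_(t < n) ((t == k)%:R : R) = 1.
  by rewrite (bigD1 k) //= eqxx big1 ?addr0 // => t /negbTE ->.
have p_int k : rel_interior (p k).
  split=> [t|]; rewrite ?mxE.
    by case: (t == i0); case: (t == k); rewrite /e /=; lra.
  under eq_bigr do rewrite mxE.
  rewrite big_split /= -mulr_sumr sumrB !delta1 subrr mulr0 addr0.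
  by rewrite sumr_const card_ord -[_ *+ n]mulr_natr mulVf // pnatr_eq0 -lt0n.
(* The beliefs [p i0], [p i1], [p i2] are affinely independent, so they cannot
   all lie on the line through [x0] with direction [d]. *)
apply: contrapT => /forallNP no_x1.
have line k : exists c, p k - x0 = c *: d.
  apply: contrapT => /forallNP nk; apply: (no_x1 (p k)); split=> // c.
  by apply/eqP/nk.
have [c0 h0] := line i0; have [c1 h1] := line i1; have [c2 h2] := line i2.
have coord k c t : p k - x0 = c *: d -> p k ord0 t - x0 ord0 t = c * d ord0 t.
  by move/rowP/(_ t); rewrite !mxE.
have := coord _ _ i0 h0; have := coord _ _ i0 h2; have := coord _ _ i1 h0.
have := coord _ _ i1 h1; have := coord _ _ i1 h2; rewrite !mxE /= => E2 E1 E0 F2 F0.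
have e_gt0 : 0 < e by rewrite /e; lra.
have c2c0 : c2 - c0 != 0.
  by rewrite subr_eq0; apply/eqP => c2c0; rewrite c2c0 in F2; lra.
have d1_0 : d ord0 i1 = 0 by apply: (mulfI c2c0); rewrite mulr0 mulrBl; lra.
by rewrite d1_0 !mulr0 in E1 E0; lra.
Qed.

End Simplex.

Section Expectation.
Variables (R : realType) (n : nat).
Implicit Types (x y a b : 'rV[R]_n) (v : 'I_n -> R).

Definition expect v y : R := \sum_t y ord0 t * v t.

Lemma expectD v a b : expect v (a + b) = expect v a + expect v b.
Proof. by rewrite /expect -big_split; apply: eq_bigr => t _; rewrite !mxE mulrDl. Qed.

Lemma expectZ v (c : R) a : expect v (c *: a) = c * expect v a.
Proof. by rewrite /expect mulr_sumr; apply: eq_bigr => t _; rewrite !mxE mulrA. Qed.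

Lemma expectB v a b : expect v (a - b) = expect v a - expect v b.
Proof. by rewrite expectD -scaleN1r expectZ mulN1r. Qed.

Lemma expect_shift v (c : R) y :
  simplex y -> expect (fun t => v t + c) y = expect v y + c.
Proof.
case=> _ y1; rewrite /expect.
by under eq_bigr do rewrite mulrDr; rewrite big_split /= -mulr_suml y1 mul1r.
Qed.

Definition parallel (u w : 'rV[R]_n) : Prop :=
  forall i j, u ord0 i * w ord0 j = u ord0 j * w ord0 i.

Lemma parallel_scale (u w : 'rV[R]_n) :
  u != 0 -> parallel u w -> exists c, w = c *: u.
Proof.
case/matrix0Pn=> i [k]; rewrite ord1 => uk0 uw.
exists (w ord0 k / u ord0 k); apply/rowP => j; rewrite mxE.
by apply: (mulfI uk0); rewrite uw; field.
Qed.

Lemma expect_two_points (i j : 'I_n) (ci cj : R) y :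
  expect (fun t => (t == i)%:R * ci + (t == j)%:R * cj) y
  = y ord0 i * ci + y ord0 j * cj.
Proof.
have expect_point k c : \sum_t y ord0 t * ((t == k)%:R * c) = y ord0 k * c.
  rewrite (bigD1 k) //= eqxx mul1r big1 ?addr0 // => t /negbTE ->.
  by rewrite mul0r mulr0.
by rewrite /expect; under eq_bigr do rewrite mulrDr; rewrite big_split /= !expect_point.
Qed.

Lemma nonparallel_expect (u w : 'rV[R]_n) : ~ parallel u w ->
  forall a b : R, exists v, expect v u = a /\ expect v w = b.
Proof.
move=> /existsNP[i /existsNP[j /eqP uw]] a b.
pose D := u ord0 i * w ord0 j - u ord0 j * w ord0 i.
have D0 : D != 0 by rewrite subr_eq0.
exists (fun t => (t == i)%:R * ((a * w ord0 j - b * u ord0 j) / D)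
               + (t == j)%:R * ((b * u ord0 i - a * w ord0 i) / D)).
by rewrite !expect_two_points /D; split; field.
Qed.

End Expectation.

Section BayesRule.
Variables (R : realType) (n : nat) (S : finType) (mu : 'rV[R]_n).
Variable (pi : 'I_n -> S -> R).
Hypotheses (mu_ge0 : forall t, 0 <= mu ord0 t) (pi_exp : experiment pi).

Lemma posterior_simplex s : sig_prob mu pi s != 0 -> simplex (posterior mu pi s).
Proof.
case: pi_exp => pi_ge0 _ s0; split=> [t|].
  by rewrite mxE divr_ge0 ?mulr_ge0 ?sumr_ge0 // => t' _; rewrite mulr_ge0.
by under eq_bigr do rewrite mxE; rewrite -mulr_suml mulfV.
Qed.

Lemma eq_bayes_expect (f g : 'rV[R]_n -> R) :
  (forall x, simplex x -> f x = g x) -> bayes_expect mu pi f = bayes_expect mu pi g.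
Proof.
move=> fg; apply: eq_bigr => s _.
have [->|s0] := eqVneq (sig_prob mu pi s) 0; first by rewrite !mul0r.
by rewrite fg //; exact: posterior_simplex.
Qed.

(* Each coarse posterior is a [g]-average of fine ones, and the value of the
   decision problem is a maximum of functions linear in the belief. *)
Lemma bayes_expect_mpc_le (S' : finType) (pi' : 'I_n -> S' -> R)
    (A : Type) (u : A -> 'I_n -> R) (astar : 'rV[R]_n -> A) :
  consistent_choice u astar -> mpc mu pi pi' ->
  bayes_expect mu pi' (fun x => exp_util u x (astar x))
  <= bayes_expect mu pi (fun x => exp_util u x (astar x)).
Proof.
move=> cons [g [g_ge0 g_row _ g_mean]].
have step s' :
    sig_prob mu pi' s' * exp_util u (posterior mu pi' s') (astar (posterior mu pi' s'))
    <= \sum_s g s s' * exp_util u (posterior mu pi s) (astar (posterior mu pi s)).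
  set a' := astar _; rewrite /exp_util mulr_sumr.
  under eq_bigr do rewrite mulrA -g_mean mulr_suml.
  rewrite exchange_big /=; apply: ler_sum => s _.
  under eq_bigr do rewrite -mulrA; rewrite -mulr_sumr.
  have [->|gs0] := eqVneq (g s s') 0; first by rewrite !mul0r.
  have g_gt0 : 0 < g s s' by rewrite lt0r gs0 g_ge0.
  rewrite ler_wpM2l //; apply: cons; apply: posterior_simplex.
  rewrite -g_row; apply/lt0r_neq0/(lt_le_trans g_gt0).
  by rewrite (bigD1 s') //= lerDl sumr_ge0.
rewrite /bayes_expect (le_trans (ler_sum _ (fun s' _ => step s'))) //.
by rewrite exchange_big /=; apply: ler_sum => s _; rewrite -mulr_suml g_row.
Qed.

End BayesRule.

Lemma bayes_respects_blackwell (R : realType) (n : nat)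
    (phi : 'rV[R]_n -> 'rV[R]_n -> 'rV[R]_n) :
  is_bayes phi -> respects_blackwell phi.
Proof.
move=> bayes mu mu_int A u astar _ _ cons S S' pi pi' pi_exp pi'_exp le_pi.
have mu_ge0 t : 0 <= mu ord0 t by case: mu_int => /(_ t) /ltW.
have WE x : simplex x -> W phi mu u astar x = exp_util u x (astar x).
  by move=> sx; rewrite /W bayes.
rewrite (eq_bayes_expect mu_ge0 pi_exp WE) (eq_bayes_expect mu_ge0 pi'_exp WE).
exact: bayes_expect_mpc_le.
Qed.

Definition split_experiment (R : realType) (n : nat) (S : finType)
  (mu : 'rV[R]_n) (q : S -> R) (xs : S -> 'rV[R]_n) : 'I_n -> S -> R :=
  fun t s => q s * xs s ord0 t / mu ord0 t.

Section SplitExperiment.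
Variables (R : realType) (n : nat) (S : finType) (mu : 'rV[R]_n).
Variables (q : S -> R) (xs : S -> 'rV[R]_n).
Hypotheses (mu_int : rel_interior mu) (xs_simplex : forall s, simplex (xs s)).

Let mu_neq0 t : mu ord0 t != 0.
Proof. by case: mu_int => /(_ t) /lt0r_neq0. Qed.

Lemma split_experimentP :
  (forall s, 0 <= q s) -> \sum_s q s *: xs s = mu ->
  experiment (split_experiment mu q xs).
Proof.
move=> q_ge0 q_mean; split=> [t s|t].
  rewrite divr_ge0 ?mulr_ge0 //; first by case: (xs_simplex s).
  by case: mu_int => /(_ t) /ltW.
rewrite /split_experiment -mulr_suml.
have /rowP/(_ t) := q_mean; rewrite summxE; under eq_bigr do rewrite mxE.
by move=> ->; rewrite mulfV.
Qed.

Lemma sig_prob_split s : sig_prob mu (split_experiment mu q xs) s = q s.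
Proof.
rewrite /sig_prob /split_experiment.
transitivity (\sum_t q s * xs s ord0 t).
  by apply: eq_bigr => t _; field.
by rewrite -mulr_sumr; case: (xs_simplex s) => _ ->; rewrite mulr1.
Qed.

Lemma mul_posterior_split s t :
  q s * posterior mu (split_experiment mu q xs) s ord0 t = q s * xs s ord0 t.
Proof.
have [->|qs] := eqVneq (q s) 0; first by rewrite !mul0r.
by rewrite mxE sig_prob_split /split_experiment; field; rewrite qs mu_neq0.
Qed.

Lemma posterior_split s :
  q s != 0 -> posterior mu (split_experiment mu q xs) s = xs s.
Proof. by move=> qs; apply/rowP => t; apply: (mulfI qs); exact: mul_posterior_split. Qed.

Lemma bayes_expect_split f :
  bayes_expect mu (split_experiment mu q xs) f = \sum_s q s * f (xs s).
Proof.
apply: eq_bigr => s _; rewrite sig_prob_split.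
by have [->|qs] := eqVneq (q s) 0; rewrite ?mul0r ?posterior_split.
Qed.

End SplitExperiment.

Lemma blackwell_geq_refine (R : realType) (n : nat) (S T : finType)
  (mu : 'rV[R]_n) (q : S -> R) (xs : S -> 'rV[R]_n)
  (r : S -> T -> R) (ys : S -> T -> 'rV[R]_n) :
  rel_interior mu -> (forall s, simplex (xs s)) -> (forall s t, simplex (ys s t)) ->
  (forall s, 0 <= q s) -> (forall s t, 0 <= r s t) ->
  (forall s, \sum_t r s t = 1) -> (forall s, \sum_t r s t *: ys s t = xs s) ->
  blackwell_geq mu
    (split_experiment mu (fun st => q st.1 * r st.1 st.2) (fun st => ys st.1 st.2))
    (split_experiment mu q xs).
Proof.
move=> mu_int xs_simplex ys_simplex q_ge0 r_ge0 r1 r_mean.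
have ys_simplex' (st : S * T) : simplex (ys st.1 st.2) by [].
pose g (st : S * T) s := if st.1 == s then q st.1 * r st.1 st.2 else 0.
have sum_fiber (F : S -> T -> R) s :
    \sum_st (if st.1 == s then F st.1 st.2 else 0) = \sum_t F s t.
  rewrite -(pair_bigA _ (fun s' t => if s' == s then F s' t else 0)) /=.
  rewrite (bigD1 s) //= eqxx [X in _ + X]big1 ?addr0 // => s' /negbTE ->.
  exact: big1.
exists g; split=> [st s|st|s|s t0].
- by rewrite /g; case: ifP => // _; rewrite mulr_ge0.
- by rewrite sig_prob_split // /g -big_mkcond /= (big_pred1 st.1).
- rewrite sig_prob_split // /g (sum_fiber (fun s t => q s * r s t)).
  by rewrite -mulr_sumr r1 mulr1.
- rewrite sig_prob_split // mul_posterior_split // -r_mean summxE mulr_sumr.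
  transitivity (\sum_st (if st.1 == s
                         then q st.1 * r st.1 st.2 * ys st.1 st.2 ord0 t0 else 0)).
    apply: eq_bigr => st _; rewrite /g; case: ifP => _; last by rewrite mul0r.
    exact: mul_posterior_split ys_simplex' _ _.
  rewrite (sum_fiber (fun s t => q s * r s t * ys s t ord0 t0)).
  by apply: eq_bigr => t _; rewrite mxE mulrA.
Qed.

Definition convex_on_simplex (R : realType) (n : nat) (f : 'rV[R]_n -> R) : Prop :=
  forall a b lam, simplex a -> simplex b -> 0 < lam < 1 ->
    f (lam *: a + (1 - lam) *: b) <= lam * f a + (1 - lam) * f b.

(* Split the prior as [mu = p m + (1 - p) w] and refine the signal [m] into
   [a] and [b]: the refined experiment is Blackwell-better, so it is worth more. *)
Lemma respects_blackwell_convex (R : realType) (n : nat)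
    (phi : 'rV[R]_n -> 'rV[R]_n -> 'rV[R]_n) (mu : 'rV[R]_n)
    (A : topologicalType) (u : A -> 'I_n -> R) (astar : 'rV[R]_n -> A) :
  rel_interior mu -> respects_blackwell_for phi mu ->
  compact [set: A] -> (forall t, continuous (fun a => u a t)) ->
  consistent_choice u astar -> convex_on_simplex (W phi mu u astar).
Proof.
move=> mu_int resp cA cu cons a b lam sa sb /andP[lam0 lam1].
set m := lam *: a + (1 - lam) *: b.
have sm : simplex m by apply: simplex_conv; rewrite // !ltW.
have [p /andP[p0 p1] w_simplex] := rel_interior_decomposition mu_int.
have p_neq1 : 1 - p != 0 by rewrite subr_eq0 gt_eqF.
set w := (1 - p)^-1 *: (mu - p *: m).
have sw : simplex w := w_simplex m sm.
pose q s : R := if s then p else 1 - p.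
pose xs s := if s then m else w.
pose r s t : R := if s then (if t then lam else 1 - lam) else 2^-1.
pose ys s t := if s then (if t then a else b) else w.
have q_mean : \sum_s q s *: xs s = mu.
  by rewrite big_bool /= /w scalerA mulfV // scale1r subrKC.
have fine_mean : \sum_st (q st.1 * r st.1 st.2) *: ys st.1 st.2 = mu.
  rewrite -(pair_bigA _ (fun s t => (q s * r s t) *: ys s t)) /= !big_bool /=.
  rewrite -q_mean big_bool /=; by apply/rowP => j; rewrite !mxE; field.
have xs_simplex s : simplex (xs s) by case: s.
have ys_simplex s t : simplex (ys s t) by case: s; case: t.
have q_ge0 s : 0 <= q s by case: s; rewrite /q; lra.
have r_ge0 s t : 0 <= r s t by case: s; case: t; rewrite /r; lra.
have r1 s : \sum_t r s t = 1 by case: s; rewrite big_bool /r /=; lra.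
have r_mean s : \sum_t r s t *: ys s t = xs s.
  case: s; rewrite big_bool //= -scalerDl -[RHS]scale1r; congr (_ *: _); lra.
have := resp A u astar cA cu cons _ _ _ _
  (split_experimentP mu_int (fun st => ys_simplex st.1 st.2)
     (fun st => mulr_ge0 (q_ge0 st.1) (r_ge0 st.1 st.2)) fine_mean)
  (split_experimentP mu_int xs_simplex q_ge0 q_mean)
  (blackwell_geq_refine mu_int xs_simplex ys_simplex q_ge0 r_ge0 r1 r_mean).
rewrite (bayes_expect_split _ mu_int xs_simplex).
rewrite (bayes_expect_split _ mu_int (fun st => ys_simplex st.1 st.2)).
rewrite -(pair_bigA _ (fun s t => q s * r s t * W phi mu u astar (ys s t))) /=.
rewrite !big_bool /= => value_le.
by rewrite -(ler_pM2l p0); nra.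
Qed.

Section Bet.
Variables (R : realType) (n : nat) (v : 'I_n -> R).

Definition bet_utility (a : bool) (t : 'I_n) : R := if a then v t else 0.

Definition bet_choice (y : 'rV[R]_n) : bool := 0 <= expect v y.

Definition bet_value (f : 'rV[R]_n -> 'rV[R]_n) (x : 'rV[R]_n) : R :=
  if 0 <= expect v (f x) then expect v x else 0.

Lemma exp_util_bet y a : exp_util bet_utility y a = if a then expect v y else 0.
Proof. by case: a => //; rewrite /exp_util big1 // => t _; rewrite mulr0. Qed.

Lemma consistent_bet_choice : consistent_choice bet_utility bet_choice.
Proof.
move=> y _ a; rewrite !exp_util_bet /bet_choice.
by case: a; have [|/ltW] := lerP 0 (expect v y).
Qed.

Lemma respects_blackwell_bet_convex (phi : 'rV[R]_n -> 'rV[R]_n -> 'rV[R]_n) mu :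
  rel_interior mu -> respects_blackwell_for phi mu ->
  convex_on_simplex (bet_value (phi mu)).
Proof.
move=> mu_int resp.
have WE : W phi mu bet_utility bet_choice = bet_value (phi mu).
  by apply/funext => x; rewrite /W exp_util_bet.
rewrite -WE; apply: (@respects_blackwell_convex _ _ _ _ bool) => //.
- by apply: finite_compact; exact: finite_finset.
- move=> t a U Ua; rewrite nbhs_simpl /=.
  apply: (filterS _ (@discrete_set1 bool a)) => b /= ->.
  exact: nbhs_singleton Ua.
- exact: consistent_bet_choice.
Qed.

End Bet.

Section Distortion.
Variables (R : realType) (n : nat) (f : 'rV[R]_n -> 'rV[R]_n).
Hypothesis f_simplex : forall x, simplex x -> simplex (f x).
Hypothesis bet_convex : forall v, convex_on_simplex (bet_value v f).

Lemma expect_distort_lt0_of_lt0 v x0 x : simplex x0 -> simplex x ->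
  0 < expect v x0 -> expect v (f x0) < 0 -> expect v x < 0 -> expect v (f x) < 0.
Proof.
move=> sx0 sx vx0 vfx0 vx; rewrite ltNge; apply/negP => vfx.
pose lam := expect v x0 / (expect v x0 - expect v x).
have lam01 : 0 < lam < 1.
  by rewrite /lam; apply/andP; split; [apply: divr_gt0 | rewrite ltr_pdivrMr]; lra.
have := bet_convex v sx sx0 lam01; rewrite /bet_value expectD !expectZ vfx.
have -> : lam * expect v x + (1 - lam) * expect v x0 = 0.
  by rewrite /lam; field; apply: lt0r_neq0; lra.
by rewrite if_same (lt_geF vfx0) mulr0 addr0; case/andP: lam01 => lam0 _; nra.
Qed.

Lemma expect_distort_lt0_of_gt0 v x0 x : simplex x0 -> rel_interior x ->
  0 < expect v x0 -> expect v (f x0) < 0 -> 0 < expect v x -> expect v (f x) < 0.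
Proof.
move=> sx0 ix vx0 vfx0 vx; rewrite ltNge; apply/negP => vfx.
have [e e01 p_simplex] := rel_interior_decomposition ix.
have /andP[e0 e1] := e01.
set p := (1 - e)^-1 *: (x - e *: x0).
have xE : e *: x0 + (1 - e) *: p = x.
  by rewrite /p scalerA mulfV ?scale1r ?subrKC // subr_eq0 gt_eqF.
have vxE : expect v x = e * expect v x0 + (1 - e) * expect v p.
  by rewrite -{1}xE expectD !expectZ.
have := bet_convex v sx0 (p_simplex x0 sx0) e01.
rewrite xE /bet_value vfx (lt_geF vfx0) mulr0 add0r.
by case: ifP => _; nra.
Qed.

Lemma expect_distort_lt0 v x0 x : simplex x0 -> rel_interior x ->
  0 < expect v x0 -> expect v (f x0) < 0 -> expect v (f x) < 0.
Proof.
move=> sx0 ix vx0 vfx0; have sx := rel_interior_simplex ix.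
case: (ltgtP (expect v x) 0) => [vx|vx|vx0'].
- exact: expect_distort_lt0_of_lt0 sx0 sx vx0 vfx0 vx.
- exact: expect_distort_lt0_of_gt0 sx0 ix vx0 vfx0 vx.
(* On the hyperplane [expect v x = 0], raise [v] by half the margin
   [- expect v (f x0)]: the reversal at [x0] survives and [x] moves above. *)
pose c := - expect v (f x0) / 2.
have := @expect_distort_lt0_of_gt0 (fun t => v t + c) x0 x sx0 ix.
have sfx0 := f_simplex sx0; have sfx := f_simplex sx.
by rewrite !expect_shift // vx0' /c; lra.
Qed.

Lemma distortion_parallel x0 x : simplex x0 -> rel_interior x ->
  parallel (f x0 - x0) (f x - f x0).
Proof.
move=> sx0 ix; apply: contrapT => /nonparallel_expect/(_ (-2) 1) [w []].
rewrite !expectB => wd we.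
(* Shifting [w] gives a payoff [v] with [v.x0 = 1], [v.(f x0) = -1] and
   [v.(f x) = 0], which the reversal lemma rules out. *)
pose c := - (expect w (f x0) + 1).
have := @expect_distort_lt0 (fun t => w t + c) x0 x sx0 ix.
have sfx0 := f_simplex sx0; have sfx := f_simplex (rel_interior_simplex ix).
by rewrite !expect_shift // /c; lra.
Qed.

Lemma distortion_const_on_interior x0 : (3 <= n)%N -> simplex x0 -> f x0 != x0 ->
  exists c, forall x, rel_interior x -> f x = c.
Proof.
move=> n3 sx0 fx0; set d := f x0 - x0.
have d0 : d != 0 by rewrite subr_eq0.
have along x : rel_interior x -> exists t, f x - f x0 = t *: d.
  by move=> ix; apply: parallel_scale d0 (distortion_parallel sx0 ix).
have [x1 [ix1 off]] := exists_interior_off_line x0 d n3.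
have [s fx1] := along x1 ix1.
set d1 := f x1 - x1.
have x1E : x1 - x0 = (1 + s) *: d - d1.
  by rewrite scalerDl scale1r -fx1 /d1 /d; apply/rowP => j; rewrite !mxE; ring.
have d1_0 : d1 != 0.
  by apply/eqP => d1_0; move: (off (1 + s)); rewrite x1E d1_0 subr0 eqxx.
(* [f x - f x1] is a multiple of both [d] and [d1], which are independent
   since [x1] is off the line. *)
exists (f x1) => x ix.
have [t fx] := along x ix.
have sx1 := rel_interior_simplex ix1.
have [c fxx1] := parallel_scale d1_0 (distortion_parallel sx1 ix).
have [c0|c_neq0] := eqVneq c 0.
  by apply/eqP; rewrite -subr_eq0 fxx1 c0 scale0r.
have d1E : d1 = ((t - s) / c) *: d.
  apply: (scalerI c_neq0); rewrite -fxx1 scalerA mulrCA mulfV // mulr1 scalerBl.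
  by rewrite -fx -fx1; apply/rowP => j; rewrite !mxE; ring.
by move: (off (1 + s - (t - s) / c)); rewrite x1E d1E -scalerBl eqxx.
Qed.

End Distortion.

Lemma simplex_sub_closure_interior (R : realType) (n : nat) (mu : 'rV[R]_n) :
  rel_interior mu -> @simplex R n `<=` closure (@rel_interior R n).
Proof.
move=> [mu_gt0 mu1] a [a_ge0 a1] B /nbhs_ballP [r /= r0 rB].
pose N := `|mu - a|; pose t := r / (r + N).
have N_ge0 : 0 <= N by exact: normr_ge0.
have t0 : 0 < t by rewrite divr_gt0 //; lra.
have t1 : t <= 1 by rewrite ler_pdivrMr; lra.
have tN : t * N < r by rewrite /t mulrAC ltr_pdivrMr; nra.
exists (a + t *: (mu - a)); split; last first.
  by apply: rB; rewrite -ball_normE /= opprD addNKr normrN normrZ gtr0_norm.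
split=> [i|].
  by rewrite !mxE; have := mu_gt0 i; have := a_ge0 i; nra.
under eq_bigr do rewrite !mxE.
by rewrite big_split /= -mulr_sumr sumrB mu1 a1 subrr mulr0 addr0.
Qed.

Lemma continuous_interior_eq (R : realType) (n : nat)
    (f g : 'rV[R]_n -> 'rV[R]_n) (mu : 'rV[R]_n) :
  {within @simplex R n, continuous f} -> continuous g -> rel_interior mu ->
  (forall x, rel_interior x -> f x = g x) -> forall a, simplex a -> f a = g a.
Proof.
move=> f_cont g_cont mu_int fg a sa.
have := simplex_sub_closure_interior mu_int sa => /within_nbhs_proper PF.
have int_sub : @rel_interior R n `<=` @simplex R n.
  by move=> x /rel_interior_simplex.
have to_fa : f @ within (@rel_interior R n) (nbhs a) --> f a.
  apply: cvg_trans ((subspace_continuousP _ _).1 f_cont a sa).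
  by apply: cvg_fmap2; exact: within_subset.
have to_ga : f @ within (@rel_interior R n) (nbhs a) --> g a.
  have fg_in : {in @rel_interior R n, f =1 g} by move=> x; rewrite inE => /fg.
  apply: cvg_trans (fmap_within_eq _ fg_in) _; apply: cvg_trans (g_cont a).
  by apply: cvg_fmap2; exact: cvg_within.
exact: cvg_unique to_fa to_ga.
Qed.

Theorem corollary2 (R : realType) (n : nat) (phi : 'rV[R]_n -> 'rV[R]_n -> 'rV[R]_n) :
  (3 <= n)%N ->
  updating_rule phi -> nontrivial_rule phi -> continuously_distorts phi ->
  (respects_blackwell phi <-> is_bayes phi).
Proof.
move=> n3 upd nontriv cont; split=> [resp|]; last exact: bayes_respects_blackwell.
move=> mu mu_int x sx; apply: contrapT => /eqP phix.
have bet_convex v := respects_blackwell_bet_convex v mu_int (resp mu mu_int).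
have [c phi_c] :=
  distortion_const_on_interior (upd mu mu_int) bet_convex n3 sx phix.
have phi_c' a : simplex a -> phi mu a = c.
  exact: continuous_interior_eq (cont mu mu_int) (@cst_continuous _ _ c)
    mu_int phi_c a.
have [a [b [sa sb]]] := nontriv mu mu_int.
by rewrite !phi_c'.
Qed.
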